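(* Let $\Gamma$ be the banana graph of genus $g\ge1$: two vertices $v_1,v_2$ joined by $n=g+1$ edges $e_1,\dots,e_n$. Fix any orientation $\iota$ of $\Gamma$. Let $B_0\in\mathbb Z^{g\times n}$ have $(B_0)_{i,1}=1$, $(B_0)_{i,i+1}=-1$ and other entries $0$, let $S$ be the $n\times n$ diagonal matrix with $S_{jj}=1$ if $\iota$ orients $e_j$ from $v_2$ to $v_1$ and $S_{jj}=-1$ otherwise, and set $B=B_0S$ and $Q=BB^T$. Then the map $\phi$ sending a vertex $\mathbf a$ of $V_Q$ to the orientation $\iota_{\mathbf a}$ of $\Gamma$ defined by: $\iota_{\mathbf a}(e_i)=\iota(e_i)$ if $(B^T\mathbf a)_i>0$, and $\iota_{\mathbf a}(e_i)$ is the reverse of $\iota(e_i)$ if $(B^T\mathbf a)_i<0$, is a well-defined bijection from the vertex set of $V_Q$ onto the set $\mathcal O(\Gamma)$ of strongly connected orientations of $\Gamma$; moreover the orientation $\iota_{\mathbf a}$ does not depend on the choice of $\iota$.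
   Context: $V_Q=\{\mathbf a\in\mathbb R^g:\ \mathbf a^TQ\mathbf a\le(\mathbf a-\mathbf c)^TQ(\mathbf a-\mathbf c)\ \forall\mathbf c\in\mathbb Z^g\}$. Rows of $B$ are the coordinates, with respect to the $\iota$-oriented edges, of the cycles $e_1-e_{i+1}$ ($i=1,\dots,g$) (written for the orientation in which every edge goes from $v_2$ to $v_1$). An orientation of a connected graph is strongly connected if for every ordered pair of vertices $(u,v)$ there is a directed path from $u$ to $v$. *)

From HB Require Import structures.
From mathcomp Require Import all_boot all_order all_algebra.
From mathcomp Require Import reals.
Set Implicit Arguments. Unset Strict Implicit. Unset Printing Implicit Defensive.
Import Order.TTheory GRing.Theory Num.Theory.
Local Open Scope ring_scope.

(* Banana graph of genus g: vertices v1 = 0, v2 = 1 (in 'I_2), edges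
   e_1..e_n indexed by 'I_n with n = g.+1 (edge e_{j+1} is index j).
   An orientation is a boolean per edge: true means "from v2 to v1". *)
Definition v1 : 'I_2 := ord0.
Definition v2 : 'I_2 := ord_max.

Definition orientation (n : nat) := {ffun 'I_n -> bool}.

Definition darc (n : nat) (o : orientation n) : rel 'I_2 :=
  fun u v => [exists j : 'I_n,
    (o j && (u == v2) && (v == v1)) || (~~ o j && (u == v1) && (v == v2))].

Definition strongly_connected (n : nat) (o : orientation n) : Prop :=
  forall u v : 'I_2, connect (darc o) u v.

Definition B0 (R : realType) (g : nat) : 'M[R]_(g, g.+1) :=
  \matrix_(i < g, j < g.+1)
    (if j == ord0 then 1 else if val j == i.+1 then -1 else 0).

Definition Smx (R : realType) (g : nat) (iota : orientation g.+1) : 'M[R]_g.+1 :=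
  diag_mx (\row_j (if iota j then 1 else -1)).

Definition Bmx (R : realType) (g : nat) (iota : orientation g.+1) : 'M[R]_(g, g.+1) :=
  B0 R g *m Smx R iota.

Definition Qmx (R : realType) (g : nat) (iota : orientation g.+1) : 'M[R]_g :=
  Bmx R iota *m (Bmx R iota)^T.

Definition qform (R : realType) (g : nat) (Q : 'M[R]_g) (a : 'cV[R]_g) : R :=
  ((a^T *m Q *m a) ord0 ord0).

Definition voronoi (R : realType) (g : nat) (Q : 'M[R]_g) : 'cV[R]_g -> Prop :=
  fun a => forall c : 'cV[int]_g,
    qform Q a <= qform Q (a - map_mx (fun z : int => z%:~R) c).

Definition is_vertex (R : realType) (g : nat) (P : 'cV[R]_g -> Prop) (a : 'cV[R]_g) : Prop :=
  P a /\ forall (x y : 'cV[R]_g) (t : R), P x -> P y -> 0 < t -> t < 1 ->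
    a = t *: x + (1 - t) *: y -> x = y.

Definition phi (R : realType) (g : nat) (iota : orientation g.+1) (a : 'cV[R]_g)
  : orientation g.+1 :=
  [ffun j => if 0 < ((Bmx R iota)^T *m a) j ord0 then iota j else ~~ iota j].

From HB Require Import structures.
From mathcomp Require Import all_boot all_order all_algebra.
From mathcomp Require Import reals.
From mathcomp Require Import ring lra zify.
Set Implicit Arguments. Unset Strict Implicit. Unset Printing Implicit Defensive.
Import Order.TTheory GRing.Theory Num.Theory.
Local Open Scope ring_scope.

(* Put y := B_0^T a. Then B^T a = S y, so relative to iota the sign pattern of
   B^T a is that of y, and Q(a) = |y|^2. The map a |-> y identifies R^g with the
   zero-sum vectors of R^n and Z^g with the zero-sum integer vectors, so V_Q
   becomes the polytope {y : sum y = 0, y_i - y_j <= 1 for all i, j}. If some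
   coordinate y_k is at distance < 1 from all the others, y can be moved both
   ways along e_k - (1/n) 1 inside the polytope; hence a vertex takes only two
   values m and m + 1, i.e. y = 1_O - |O|/n for a nonempty proper set O of edges.
   Conversely such a y is a vertex, because the constraints y_i - y_j <= 1 with
   i in O, j not in O are tight and determine it. The sign pattern of y is O, and
   an orientation of the banana graph is strongly connected iff it uses both
   directions, i.e. iff O is nonempty and proper. *)

Lemma is_vertex_pm_eq0 (R : realType) (g : nat) (P : 'cV[R]_g -> Prop) (a w : 'cV[R]_g) :
  is_vertex P a -> P (a + w) -> P (a - w) -> w = 0.
Proof.
move=> [_ extreme] Pp Pm.
have half_gt0 : (0 : R) < 2^-1 by rewrite invr_gt0 ltr0n.
have half_lt1 : (2^-1 : R) < 1 by rewrite invf_lt1 ?ltr0n // ltr1n.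
have mid : a = 2^-1 *: (a + w) + (1 - 2^-1) *: (a - w).
  by apply/matrixP => i j; rewrite !mxE; field.
have := extreme _ _ _ Pp Pm half_gt0 half_lt1 mid.
by move=> /matrixP eq_pm; apply/matrixP => i j; have := eq_pm i j; rewrite !mxE; lra.
Qed.

Lemma strongly_connectedP n (o : orientation n) :
  strongly_connected o <-> (exists i, o i) /\ (exists j, ~~ o j).
Proof.
have two_vertices (u : 'I_2) : u = v1 \/ u = v2.
  by case: u => [[|[|m]] hm]; [left|right|]; rewrite // ; apply: val_inj.
split=> [sc|[[i oi] [j noj]] u v].
  split.
    case/connectP: (sc v2 v1) => -[|x p] /=; first by move=> _ /(congr1 val).
    case/andP => /existsP [j] arc _ _; exists j.
    by move: arc; case: (o j).
  case/connectP: (sc v1 v2) => -[|x p] /=; first by move=> _ /(congr1 val).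
  case/andP => /existsP [j] arc _ _; exists j.
  by move: arc; case: (o j).
case: (two_vertices u) => ->; case: (two_vertices v) => ->; rewrite ?connect0 //;
  apply: connect1; apply/existsP.
- by exists j; rewrite (negbTE noj).
- by exists i; rewrite oi.
Qed.

Section Centered.
Variables (R : realFieldType) (n : nat).
Hypothesis n_gt0 : (0 < n)%N.

Let n_neq0 : n%:R != 0 :> R.
Proof. by rewrite pnatr_eq0 -lt0n. Qed.

Definition centered (o : pred 'I_n) (k : 'I_n) : R := (o k)%:R - #|o|%:R / n%:R.

Lemma sum_natr_bool (o : pred 'I_n) : \sum_k ((o k)%:R : R) = #|o|%:R.
Proof.
rewrite -sum1_card natr_sum [in RHS]big_mkcond /=; apply: eq_bigr => k _.
by rewrite unfold_in; case: (o k).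
Qed.

Lemma sum_centered o : \sum_k centered o k = 0.
Proof.
by rewrite sumrB sum_natr_bool sumr_const card_ord -[_ *+ n]mulr_natr divfK ?subrr.
Qed.

Lemma centered_of_shift (y : 'I_n -> R) (o : pred 'I_n) (c : R) :
  \sum_k y k = 0 -> (forall k, y k = c + (o k)%:R) -> y =1 centered o.
Proof.
move=> y0 yE k.
have c_n : c * n%:R = - #|o|%:R.
  move: y0; rewrite (eq_bigr _ (fun k _ => yE k)) big_split sum_natr_bool /=.
  by rewrite sumr_const card_ord -mulr_natr; lra.
have c_eq : c = - #|o|%:R / n%:R by rewrite -c_n mulfK.
by rewrite yE c_eq /centered; ring.
Qed.

Lemma centered_of_cross_gap (y : 'I_n -> R) (o : pred 'I_n) :
  \sum_k y k = 0 -> (exists i, o i) -> (exists j, ~~ o j) ->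
  (forall i j, o i -> ~~ o j -> y i - y j = 1) -> y =1 centered o.
Proof.
move=> y0 [i oi] [j noj] gap; apply: (centered_of_shift (c := y j)) => // k.
case ok: (o k) => /=.
- by have := gap k j ok noj; lra.
- by have := gap i k oi (negbT ok); have := gap i j oi noj; lra.
Qed.

Section Nonconstant.
Variable o : pred 'I_n.
Hypotheses (o_some : exists i, o i) (o_not_all : exists j, ~~ o j).

Let card_ratio_bounds : 0 < #|o|%:R / n%:R :> R /\ #|o|%:R / n%:R < 1 :> R.
Proof.
have [i oi] := o_some; have [j noj] := o_not_all.
have o_gt0 : (0 < #|o|)%N by apply/card_gt0P; exists i.
have oC_gt0 : (0 < #|[predC o]|)%N by apply/card_gt0P; exists j.
have o_lt : (#|o| < n)%N.
  by move: oC_gt0; rewrite -(ltn_add2l #|o|) addn0 cardC card_ord.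
by split; [rewrite divr_gt0 ?ltr0n | rewrite ltr_pdivrMr ?ltr0n // mul1r ltr_nat].
Qed.

Lemma centered_gt0 k : (0 < centered o k) = o k.
Proof. by have := card_ratio_bounds; rewrite /centered; case: (o k) => /=; lra. Qed.

Lemma centered_neq0 k : centered o k != 0.
Proof. by have := card_ratio_bounds; rewrite /centered; case: (o k) => /=; lra. Qed.

End Nonconstant.
End Centered.

Arguments centered {R n} o k.

Lemma int_quad_ge0 (R : realDomainType) (z : int) (d : R) :
  0 <= d -> d <= 1 -> 0 <= z%:~R * (z%:~R + 1 - 2 * d).
Proof.
move=> d_ge0 d_le1.
have [z_le|[->|z_ge]] : (z <= -1)%R \/ z = 0 \/ (1 <= z)%R by lia.
- have : z%:~R <= -1 :> R by rewrite -(ler_int R) in z_le.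
  nra.
- by rewrite mul0r.
- have : 1 <= z%:~R :> R by rewrite -(ler_int R) in z_ge.
  nra.
Qed.

Section Flow.
Variables (R : realType) (g : nat).

Definition flow (a : 'cV[R]_g) (j : 'I_g.+1) : R := ((B0 R g)^T *m a) j ord0.

Definition unflow (y : 'I_g.+1 -> R) : 'cV[R]_g := \col_k (- y (lift ord0 k)).

Lemma flow_ord0 a : flow a ord0 = \sum_i a i ord0.
Proof. by rewrite /flow !mxE; apply: eq_bigr => i _; rewrite !mxE eqxx mul1r. Qed.

Lemma flow_lift a k : flow a (lift ord0 k) = - a k ord0.
Proof.
rewrite /flow !mxE (bigD1 k) //= big1 => [|i ik]; rewrite !mxE /=.
  by rewrite eqxx mulN1r addr0.
by rewrite /bump leq0n add1n eqSS eq_sym val_eqE (negbTE ik) mul0r.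
Qed.

Lemma sum_flow a : \sum_j flow a j = 0.
Proof.
rewrite big_ord_recl flow_ord0 (eq_bigr _ (fun k _ => flow_lift a k)).
by rewrite sumrN subrr.
Qed.

Lemma flow_inj a b : flow a =1 flow b -> a = b.
Proof.
move=> ab; apply/matrixP => i j; rewrite (ord1 j).
by have := ab (lift ord0 i); rewrite !flow_lift => /oppr_inj.
Qed.

Lemma unflowK y : \sum_j y j = 0 -> flow (unflow y) =1 y.
Proof.
move=> y0 j; case: (unliftP ord0 j) => [k ->|->].
  by rewrite flow_lift mxE opprK.
rewrite flow_ord0; under eq_bigr do rewrite mxE.
by move: y0; rewrite big_ord_recl sumrN; lra.
Qed.

Lemma flow0 j : flow 0 j = 0.
Proof. by rewrite /flow mulmx0 mxE. Qed.

Lemma flowD a b j : flow (a + b) j = flow a j + flow b j.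
Proof. by rewrite /flow mulmxDr mxE. Qed.

Lemma flowZ t a j : flow (t *: a) j = t * flow a j.
Proof. by rewrite /flow -scalemxAr mxE. Qed.

Lemma flowB a b j : flow (a - b) j = flow a j - flow b j.
Proof. by rewrite flowD -scaleN1r flowZ mulN1r. Qed.

Lemma flow_int (c : 'cV[int]_g) k :
  exists z : int, flow (map_mx (fun z : int => z%:~R) c) k = z%:~R.
Proof.
case: (unliftP ord0 k) => [i ->|->].
  by exists (- c i ord0); rewrite flow_lift mxE intrN.
exists (\sum_i c i ord0); rewrite flow_ord0 rmorph_sum.
by apply: eq_bigr => i _; rewrite mxE.
Qed.

Lemma Bmx_flow (iota : orientation g.+1) a j :
  ((Bmx R iota)^T *m a) j ord0 = (if iota j then 1 else -1) * flow a j.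
Proof. by rewrite /Bmx trmx_mul /Smx tr_diag_mx -mulmxA mul_diag_mx mxE mxE. Qed.

Lemma qform_flow (iota : orientation g.+1) a :
  qform (Qmx R iota) a = \sum_j flow a j ^+ 2.
Proof.
set Bta := (Bmx R iota)^T *m a.
rewrite /qform (_ : a^T *m _ *m a = Bta^T *m Bta); last first.
  by rewrite /Bta /Qmx [(_ *m a)^T]trmx_mul trmxK !mulmxA.
rewrite mxE; apply: eq_bigr => j _; rewrite mxE /Bta Bmx_flow.
by case: (iota j); rewrite ?mul1r ?mulN1r ?mulrNN expr2.
Qed.

Section Voronoi.
Variable iota : orientation g.+1.
Local Notation V := (voronoi (Qmx R iota)).

Lemma qformB_diff a b :
  qform (Qmx R iota) (a - b) - qform (Qmx R iota) a =
  \sum_k flow b k * (flow b k - 2 * flow a k).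
Proof. by rewrite !qform_flow -sumrB; apply: eq_bigr => k _; rewrite flowB; ring. Qed.

Lemma voronoiP a : V a <-> forall i j, flow a i - flow a j <= 1.
Proof.
split=> [aV i j|spread c].
  have [<-|ij] := eqVneq i j; first by rewrite subrr ler01.
  pose e k : R := (k == i)%:R - (k == j)%:R.
  pose c : 'cV[int]_g :=
    \col_k (- ((lift ord0 k == i)%:Z - (lift ord0 k == j)%:Z)).
  have ce : map_mx (fun z : int => z%:~R) c = unflow e.
    by apply/matrixP => k l; rewrite !mxE intrN intrB.
  have flow_c : flow (map_mx (fun z : int => z%:~R) c) =1 e.
    by rewrite ce; apply: unflowK; rewrite sumrB !sum_natr_bool !card1 subrr.
  have := aV c; rewrite -subr_ge0 qformB_diff.
  under eq_bigr do rewrite flow_c /e.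
  rewrite (bigD1 i) //= (bigD1 j) 1?eq_sym //= big1 => [|k /andP[ki kj]].
    by rewrite !eqxx eq_sym (negbTE ij) /=; lra.
  by rewrite (negbTE ki) (negbTE kj) subrr mul0r.
have [i0 _ min_i0] := @arg_minP _ R _ ord0 predT (flow a) isT.
rewrite -subr_ge0 qformB_diff; move: (map_mx _ c) (flow_int c) => b b_int.
(* Shifting by the minimum is free as sum b = 0; then each term is >= 0 since
   flow b k is an integer. *)
rewrite (eq_bigr (fun k => flow b k * (flow b k + 1 - 2 * (flow a k - flow a i0))
    - (1 + 2 * flow a i0) * flow b k)) => [|k _]; last by ring.
rewrite sumrB -mulr_sumr sum_flow mulr0 subr0.
apply: sumr_ge0 => k _; have [z ->] := b_int k.
by apply: int_quad_ge0; [have := min_i0 k isT | have := spread k i0]; lra.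
Qed.

Lemma phi_flow a j : flow a j != 0 -> phi iota a j = (0 < flow a j).
Proof.
rewrite /phi ffunE Bmx_flow.
by case: (iota j); rewrite ?mul1r ?mulN1r ?oppr_gt0 //=; case: ltrgt0P.
Qed.

Lemma phi_centered (o : orientation g.+1) a :
  strongly_connected o -> flow a =1 centered o -> phi iota a = o.
Proof.
case/strongly_connectedP => o_some o_not_all ya; apply/ffunP => j.
by rewrite phi_flow ya ?centered_neq0 // centered_gt0.
Qed.

Lemma voronoi_perturb a k (d e : R) :
  V a -> (forall j, `|flow a k - flow a j| + d <= 1) -> `|e| <= d ->
  V (a + e *: unflow (centered (pred1 k))).
Proof.
move=> /voronoiP aV near_k; rewrite ler_norml => /andP[e_lo e_hi].
have near j : - (1 - d) <= flow a k - flow a j <= 1 - d.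
  by rewrite -ler_norml; have := near_k j; lra.
apply/voronoiP => i j; rewrite !flowD !flowZ !unflowK ?sum_centered //.
rewrite (_ : _ - _ = flow a i - flow a j + e * ((i == k)%:R - (j == k)%:R)); last first.
  by rewrite /centered /=; ring.
have [->|ik] := eqVneq i k; have [->|jk] := eqVneq j k.
- by rewrite !subrr mulr0 addr0 ler01.
- by case/andP: (near j); rewrite /= subr0 mulr1; lra.
- by case/andP: (near i); rewrite /= sub0r mulrN1; lra.
- by rewrite subrr mulr0 addr0; apply: aV.
Qed.

Section Vertices.
Hypothesis g_gt0 : (0 < g)%N.

Lemma vertex_flow_gap a k : is_vertex V a -> exists j, 1 <= `|flow a k - flow a j|.
Proof.
move=> va.
have [j1 _ max_j1] := @arg_maxP _ R _ ord0 predT (fun j => `|flow a k - flow a j|) isT.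
have [|far] := lerP 1 `|flow a k - flow a j1|; first by exists j1.
pose d := 1 - `|flow a k - flow a j1|.
have d_gt0 : 0 < d by rewrite /d; lra.
have shiftV e : `|e| <= d -> V (a + e *: unflow (centered (pred1 k))).
  by apply: voronoi_perturb va.1 _ => j; have := max_j1 j isT; rewrite /d /=; lra.
have plusV : V (a + d *: unflow (centered (pred1 k))).
  by apply: shiftV; rewrite gtr0_norm.
have minusV : V (a - d *: unflow (centered (pred1 k))).
  by rewrite -scaleNr; apply: shiftV; rewrite normrN gtr0_norm.
have := congr1 (fun m => flow m k) (is_vertex_pm_eq0 va plusV minusV).
rewrite /= flowZ unflowK ?sum_centered // /centered /= eqxx card1 flow0 => /eqP.
have inv_lt1 : 1%:R / g.+1%:R < 1 :> R by rewrite ltr_pdivrMr ?ltr0n // mul1r ltr1n ltnS.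
by rewrite mulf_eq0 gt_eqF //= subr_eq0 eq_sym lt_eqF.
Qed.

Lemma vertex_flow_centered a : is_vertex V a ->
  exists2 o : orientation g.+1, strongly_connected o & flow a =1 centered o.
Proof.
move=> va; have aV := (voronoiP a).1 va.1.
have [i0 _ min_i0] := @arg_minP _ R _ ord0 predT (flow a) isT.
pose o : orientation g.+1 := [ffun j => flow a i0 < flow a j].
have two_valued k : flow a k = flow a i0 + (o k)%:R.
  have [j] := vertex_flow_gap k va; rewrite /o ffunE ler_normr.
  move: (min_i0 j isT) (min_i0 k isT) (aV k i0) (aV j i0) => min_j min_k k_i0 j_i0.
  case/orP=> gap.
  - have -> : flow a k = flow a i0 + 1 by lra.
    by rewrite ltrDl ltr01.
  - have -> : flow a k = flow a i0 by lra.
    by rewrite ltxx addr0.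
exists o.
  apply/strongly_connectedP; split; last by exists i0; rewrite ffunE ltxx.
  have [j] := vertex_flow_gap i0 va; rewrite ler_normr.
  move: (min_i0 j isT) (aV j i0) => min_j j_i0.
  by case/orP=> gap; exists j; rewrite ffunE; lra.
apply: (centered_of_shift (ltn0Sn g) (c := flow a i0)) => //; exact: sum_flow.
Qed.

End Vertices.

Lemma centered_is_vertex (o : orientation g.+1) a :
  strongly_connected o -> flow a =1 centered o -> is_vertex V a.
Proof.
case/strongly_connectedP => o_some o_not_all ya.
have {ya} : forall k, flow a k = (o k)%:R - #|(o : pred 'I_g.+1)|%:R / g.+1%:R := ya.
move: (_ / g.+1%:R) => t ya.
have cross i j : o i -> ~~ o j -> flow a i - flow a j = 1.
  by move=> oi noj; rewrite !ya oi (negbTE noj) /=; lra.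
split=> [|x z s xV zV s_gt0 s_lt1 a_xz].
  by apply/voronoiP => i j; rewrite !ya; case: (o i); case: (o j) => /=; lra.
have tight i j : o i -> ~~ o j -> flow x i - flow x j = 1 /\ flow z i - flow z j = 1.
  move=> oi noj; have := cross i j oi noj; rewrite a_xz !flowD !flowZ.
  have := (voronoiP x).1 xV i j; have := (voronoiP z).1 zV i j; nra.
have center_on y : V y -> (forall i j, o i -> ~~ o j -> flow y i - flow y j = 1) ->
  flow y =1 centered o.
  by move=> _; apply: centered_of_cross_gap => //; exact: sum_flow.
apply: flow_inj => k.
by rewrite (center_on x) ?(center_on z) // => i j oi noj; case: (tight i j oi noj).
Qed.

End Voronoi.
End Flow.

Theorem theorem3p10 (R : realType) (g : nat) (hg : (0 < g)%N)
    (iota : orientation g.+1) :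
  let V := voronoi (Qmx R iota) in
  (* well-defined: no coordinate of B^T a vanishes at a vertex *)
  (forall a, is_vertex V a -> forall j, ((Bmx R iota)^T *m a) j ord0 != 0) /\
  (* maps into strongly connected orientations *)
  (forall a, is_vertex V a -> strongly_connected (phi iota a)) /\
  (* injective *)
  (forall a b, is_vertex V a -> is_vertex V b -> phi iota a = phi iota b -> a = b) /\
  (* surjective *)
  (forall o : orientation g.+1, strongly_connected o ->
     exists a, is_vertex V a /\ phi iota a = o) /\
  (* independent of the choice of iota *)
  (forall (iota' : orientation g.+1) a, is_vertex V a -> phi iota' a = phi iota a).
Proof.
move=> V; split.
  move=> a /(vertex_flow_centered hg) [o /strongly_connectedP[o_some o_not_all] ya] j.
  rewrite Bmx_flow ya mulf_neq0 ?centered_neq0 //.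
  by case: (iota j); rewrite ?oppr_eq0 oner_eq0.
split.
  by move=> a /(vertex_flow_centered hg) [o sc_o ya]; rewrite (phi_centered _ sc_o ya).
split.
  move=> a b /(vertex_flow_centered hg) [o sc_o ya].
  move=> /(vertex_flow_centered hg) [o' sc_o' yb].
  rewrite (phi_centered _ sc_o ya) (phi_centered _ sc_o' yb) => oo'.
  by apply: flow_inj => j; rewrite ya yb oo'.
split.
  move=> o sc_o; have ya := unflowK (sum_centered R (ltn0Sn g) o).
  exists (unflow (centered o)).
  by split; [exact: centered_is_vertex sc_o ya | exact: phi_centered].
move=> iota' a /(vertex_flow_centered hg) [o sc_o ya].
by rewrite !(phi_centered _ sc_o ya).
Qed.
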